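(* Consider the algorithm described in the context, and suppose it does not terminate finitely. Then for all $k\ge1$, $0<\tau_k\le\tau_{k-1}$.
   Context: Problem: $\min_{x\in\mathbb{R}^n} f(x)+r(x)$ subject to $c(x)=0$, where $f:\mathbb{R}^n\to\mathbb{R}$ and $c:\mathbb{R}^n\to\mathbb{R}^m$ ($m\le n$) are continuously differentiable and $r:\mathbb{R}^n\to\mathbb{R}_{\ge 0}$ is convex. Write $g(x)=\nabla f(x)$, $J(x)=\nabla c(x)^T$, and $f_k=f(x_k)$, $g_k=g(x_k)$, $c_k=c(x_k)$, $J_k=J(x_k)$, $r_k=r(x_k)$. All norms are Euclidean. Merit function: $\Phi_\tau(x)=\tau(f(x)+r(x))+\|c(x)\|_2$. Algorithm: inputs $x_0$, $\alpha_0>0$, $\tau_{-1}>0$; constants $\kappa_v>0$, $\sigma_c,\epsilon_\tau,\xi,\eta\in(0,1)$, $\sigma_u\in(0,1/2]$, $\bar\sigma_u:=\sigma_u+\tfrac12$. For $k=0,1,\dots$: 1. If $J_k^Tc_k\ne0$, compute $v_k$ with $v_k\in\mathrm{Range}(J_k^T)$, $\|v_k\|_2\le\kappa_v\alpha_k\|J_k^Tc_k\|_2$, $\|c_k+J_kv_k\|_2\le\|c_k+J_kv_k^c\|_2$, where $v_k^c=-\beta_k^cJ_k^Tc_k$ with $\beta_k^c$ minimizing $\tfrac12\|c_k-\beta J_kJ_k^Tc_k\|_2^2$ over $0\le\beta\le\kappa_v\alpha_k$. Otherwise set $v_k=0$, and if $c_k\ne0$ terminate. 2. Let $u_k$ be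 the unique minimizer of $g_k^Tu+\tfrac1{2\alpha_k}\|u\|_2^2+r(x_k+v_k+u)$ subject to $J_ku=0$; set $s_k=v_k+u_k$. If $s_k=0$, terminate. 3. Let $D_k:=g_k^Ts_k+\bar\sigma_u\|s_k\|_2^2/\alpha_k+r(x_k+s_k)-r_k$; $\tau_{k,\mathrm{trial}}=\infty$ if $D_k\le0$, else $\tau_{k,\mathrm{trial}}=(1-\sigma_c)(\|c_k\|_2-\|c_k+J_kv_k\|_2)/D_k$. Set $\tau_k=\tau_{k-1}$ if $\tau_{k-1}\le\tau_{k,\mathrm{trial}}$, else $\tau_k=\min\{(1-\epsilon_\tau)\tau_{k-1},\tau_{k,\mathrm{trial}}\}$. 4. With $\Delta q_k(s,\tau):=-\tau(g_k^Ts+\tfrac1{2\alpha_k}\|s\|_2^2+r(x_k+s)-r_k)+\|c_k\|_2-\|c_k+J_ks\|_2$: if $\Phi_{\tau_k}(x_k+s_k)\le\Phi_{\tau_k}(x_k)-\eta\Delta q_k(s_k,\tau_k)$ set $x_{k+1}=x_k+s_k$, $\alpha_{k+1}=\alpha_k$; else $x_{k+1}=x_k$, $\alpha_{k+1}=\xi\alpha_k$. Standing assumption: there is an open convex set $\mathcal X$ containing all iterates $x_k$ and trial points $x_k+s_k$ such that $f$ is bounded below on $\mathcal X$, $\nabla f$ is bounded and Lipschitz continuous on $\mathcal X$, $c$ is bounded on $\mathcal X$, $J$ is bounded and Lipschitz continuous on $\mathcal X$, and all subgradients of $r$ at points of $\mathcal X$ are uniformly bounded in norm. *)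

From HB Require Import structures.
From mathcomp Require Import all_boot all_order all_algebra.
From mathcomp Require Import all_classical all_reals all_analysis.
Set Implicit Arguments. Unset Strict Implicit. Unset Printing Implicit Defensive.
Import Order.TTheory GRing.Theory Num.Theory.
Import numFieldNormedType.Exports.
Local Open Scope classical_set_scope.
Local Open Scope ring_scope.

Section Defs.
Variable R : realType.

Definition dotv {n : nat} (u v : 'cV[R]_n) : R := \sum_i u i 0 * v i 0.
Definition enorm {n : nat} (v : 'cV[R]_n) : R := Num.sqrt (dotv v v).
(* Frobenius norm for matrices (used only for boundedness / Lipschitz
   statements, where all matrix norms are equivalent) *)
Definition fnorm {m n : nat} (A : 'M[R]_(m, n)) : R :=
  Num.sqrt (\sum_i \sum_j A i j ^+ 2).

Definition convex_fun {n : nat} (r : 'cV[R]_n -> R) : Prop :=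
  forall (x y : 'cV[R]_n) (t : R), 0 <= t <= 1 ->
    r (t *: x + (1 - t) *: y) <= t * r x + (1 - t) * r y.

Definition subgrad {n : nat} (r : 'cV[R]_n -> R) (x y : 'cV[R]_n) : Prop :=
  forall z, r x + dotv y (z - x) <= r z.

(* tau update of Step 3: tau_trial = +oo when D <= 0, num / D otherwise *)
Definition tau_update (eps_tau tau_prev D num : R) : R :=
  if D <= 0 then tau_prev
  else if tau_prev <= num / D then tau_prev
  else Num.min ((1 - eps_tau) * tau_prev) (num / D).

End Defs.

From HB Require Import structures.
From mathcomp Require Import all_boot all_order all_algebra.
From mathcomp Require Import all_classical all_reals all_analysis.
From mathcomp Require Import ring lra.
Set Implicit Arguments. Unset Strict Implicit. Unset Printing Implicit Defensive.
Import Order.TTheory GRing.Theory Num.Theory.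
Import numFieldNormedType.Exports.
Local Open Scope classical_set_scope.
Local Open Scope ring_scope.

(** The penalty parameter only moves by the update of Step 3, which never
   increases it and keeps it positive provided that whenever [D_k > 0] the
   trial numerator [||c_k|| - ||c_k + J_k v_k||] is positive.  If
   [J_k^T c_k <> 0], moving from [c_k] along [-J_k J_k^T c_k] strictly
   decreases the residual for small steps, so the Cauchy step, and hence [v_k],
   strictly decreases it.  If [J_k^T c_k = 0], then [v_k = 0] and the
   tangential subproblem is [1/alpha_k]-strongly convex on the null space of
   [J_k], whence [g_k^T u_k + ||u_k||^2/alpha_k + r(x_k + u_k) - r_k <= 0], so
   [D_k <= 0] because [sigma_u <= 1/2]. *)

Lemma le_of_forall_mul_lt1 (R : realFieldType) (a b : R) :
  (forall t, 0 <= t < 1 -> a <= t * b) -> a <= b.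
Proof.
move=> hab; have a_le0 : a <= 0 by have := hab 0; rewrite mul0r lexx ltr01; apply.
have [b_ge0 | b_lt0] := lerP 0 b; first exact: le_trans b_ge0.
rewrite leNgt; apply/negP => b_lt_a.
have ab_ge0 : 0 <= a / b by rewrite ler_ndivlMr // mul0r.
have ab_lt1 : a / b < 1 by rewrite ltr_ndivrMr // mul1r.
have tb : (1 + a / b) / 2 * b = (b + a) / 2 by field; rewrite lt_eqF.
have := hab ((1 + a / b) / 2); rewrite tb; lra.
Qed.

Section Euclidean.
Variable R : realType.
Implicit Types (a : R).

Lemma dotvC n (u w : 'cV[R]_n) : dotv u w = dotv w u.
Proof. by apply: eq_bigr => i _; rewrite mulrC. Qed.

Lemma dotvZl n a (u w : 'cV[R]_n) : dotv (a *: u) w = a * dotv u w.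
Proof. by rewrite /dotv mulr_sumr; apply: eq_bigr => i _; rewrite mxE mulrA. Qed.

Lemma dotvZr n a (u w : 'cV[R]_n) : dotv u (a *: w) = a * dotv u w.
Proof. by rewrite dotvC dotvZl dotvC. Qed.

Lemma dotv_mulmxl p n (A : 'M[R]_(p, n)) (u : 'cV[R]_n) (z : 'cV[R]_p) :
  dotv (A *m u) z = dotv u (A^T *m z).
Proof.
rewrite /dotv; under eq_bigr do rewrite mxE big_distrl /=.
under [RHS]eq_bigr do rewrite mxE big_distrr /=.
rewrite exchange_big; apply: eq_bigr => j _; apply: eq_bigr => i _.
by rewrite mxE mulrAC mulrC mulrA.
Qed.

Lemma dotv_ge0 n (u : 'cV[R]_n) : 0 <= dotv u u.
Proof. by apply: sumr_ge0 => i _; rewrite -expr2 sqr_ge0. Qed.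

Lemma dotv_eq0 n (u : 'cV[R]_n) : (dotv u u == 0) = (u == 0).
Proof.
apply/eqP/eqP => [|->]; last by rewrite /dotv big1 // => i _; rewrite mxE mul0r.
move/psumr_eq0P => u_eq0; apply/matrixP => i j; rewrite ord1 mxE.
have /eqP := u_eq0 (fun k _ => ltac:(by rewrite -expr2 sqr_ge0)) i isT.
by rewrite mulf_eq0 orbb => /eqP.
Qed.

Lemma enorm_ge0 n (u : 'cV[R]_n) : 0 <= enorm u.
Proof. exact: sqrtr_ge0. Qed.

Lemma enorm_sqr n (u : 'cV[R]_n) : enorm u ^+ 2 = dotv u u.
Proof. by rewrite sqr_sqrtr // dotv_ge0. Qed.

Lemma enorm_sqrDZ n a (u w : 'cV[R]_n) :
  enorm (u + a *: w) ^+ 2 = enorm u ^+ 2 + 2 * a * dotv u w + a ^+ 2 * enorm w ^+ 2.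
Proof.
rewrite !enorm_sqr /dotv !mulr_sumr -!big_split; apply: eq_bigr => i _ /=.
by rewrite !mxE; ring.
Qed.

Lemma enorm_sqrZ n a (u : 'cV[R]_n) : enorm (a *: u) ^+ 2 = a ^+ 2 * enorm u ^+ 2.
Proof. by rewrite !enorm_sqr dotvZl dotvZr mulrA expr2. Qed.

Lemma ltr_enorm n (u w : 'cV[R]_n) : (enorm u < enorm w) = (enorm u ^+ 2 < enorm w ^+ 2).
Proof. by rewrite ltr_pXn2r // nnegrE enorm_ge0. Qed.

End Euclidean.

Section NormalStep.
Variable R : realType.

Lemma enorm_argmin_subZ_lt m (c w : 'cV[R]_m) (K beta : R) :
  0 < K -> 0 < dotv c w ->
  (forall b, 0 <= b <= K -> enorm (c - beta *: w) ^+ 2 <= enorm (c - b *: w) ^+ 2) ->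
  enorm (c - beta *: w) < enorm c.
Proof.
move=> K_gt0 cw_gt0 beta_min.
set P := dotv c w in cw_gt0 *; set W := enorm w ^+ 2.
have W_ge0 : 0 <= W by rewrite sqr_ge0.
(* Any step [b <= P / (W + 1)] already beats [b = 0]. *)
pose b := Num.min K (P / (W + 1)).
have b_gt0 : 0 < b by rewrite lt_min K_gt0 divr_gt0 // ltr_wpDl.
have bW_le : b * (W + 1) <= P by rewrite -ler_pdivlMr ?ge_min ?lexx ?orbT // ltr_wpDl.
rewrite ltr_enorm; apply: le_lt_trans (beta_min b _) _; first by rewrite ltW //= ge_min lexx.
rewrite -scaleNr enorm_sqrDZ -/P -/W; nra.
Qed.

Lemma dotv_mulmx_trmx_gt0 m n (A : 'M[R]_(m, n)) (c : 'cV[R]_m) :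
  A^T *m c != 0 -> 0 < dotv c (A *m A^T *m c).
Proof. by move=> Ac_neq0; rewrite -mulmxA dotvC dotv_mulmxl lt_def dotv_eq0 Ac_neq0 dotv_ge0. Qed.

Lemma normal_step_residual_lt m n (A : 'M[R]_(m, n)) (c : 'cV[R]_m) (v : 'cV[R]_n) (K : R) :
  0 < K -> A^T *m c != 0 ->
  (exists beta : R,
    [/\ 0 <= beta <= K,
        (forall b, 0 <= b <= K ->
           enorm (c - beta *: (A *m A^T *m c)) ^+ 2 / 2
           <= enorm (c - b *: (A *m A^T *m c)) ^+ 2 / 2) &
        enorm (c + A *m v) <= enorm (c + A *m (- beta *: (A^T *m c)))]) ->
  enorm (c + A *m v) < enorm c.
Proof.
move=> K_gt0 Ac_neq0 [beta [_ beta_min v_le]].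
apply: (le_lt_trans v_le); rewrite -scalemxAr mulmxA scaleNr.
apply: (enorm_argmin_subZ_lt K_gt0 (dotv_mulmx_trmx_gt0 Ac_neq0)) => b b_in.
by rewrite -(ler_pM2r (_ : 0 < 2^-1)) ?invr_gt0 //; apply: beta_min.
Qed.

End NormalStep.

Lemma convex_fun_segment (R : realType) n (r : 'cV[R]_n -> R) (y u : 'cV[R]_n) (t : R) :
  convex_fun r -> 0 <= t <= 1 -> r (y + t *: u) <= t * r (y + u) + (1 - t) * r y.
Proof.
move=> r_convex t01; have := r_convex (y + u) y t t01.
have -> // : t *: (y + u) + (1 - t) *: y = y + t *: u.
by apply/matrixP => i j; rewrite !mxE; ring.
Qed.

Section TangentialStep.
Variable R : realType.
Variables (n p : nat) (A : 'M[R]_(p, n)) (r : 'cV[R]_n -> R) (g y u : 'cV[R]_n) (alpha : R).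
Hypotheses (alpha_gt0 : 0 < alpha) (r_convex : convex_fun r) (Au_eq0 : A *m u = 0).
Hypothesis u_min : forall u', A *m u' = 0 ->
  dotv g u + enorm u ^+ 2 / (2 * alpha) + r (y + u)
  <= dotv g u' + enorm u' ^+ 2 / (2 * alpha) + r (y + u').

(* Comparing [u] with [t *: u] for [t] in [[0, 1)] and letting [t] tend to [1]:
   this is the [1 / alpha]-strong convexity of the subproblem. *)
Lemma tangential_step_descent :
  dotv g u + enorm u ^+ 2 / alpha + r (y + u) - r y <= 0.
Proof.
set a := dotv g u + r (y + u) - r y; set E := enorm u ^+ 2 / (2 * alpha).
have E_ge0 : 0 <= E by rewrite divr_ge0 ?sqr_ge0 // mulr_ge0 // ltW.
have a_le t : 0 <= t < 1 -> a + E <= t * - E.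
  move=> /andP[t_ge0 t_lt1].
  have /(convex_fun_segment y u r_convex) r_seg : 0 <= t <= 1 by rewrite t_ge0 ltW.
  have := @u_min (t *: u); rewrite -scalemxAr Au_eq0 scaler0 => /(_ erefl).
  rewrite dotvZr enorm_sqrZ -mulrA -/E => min_t.
  have : (1 - t) * (a + E + t * E) <= 0 by rewrite /a; nra.
  by rewrite pmulr_rle0 ?subr_gt0 //; lra.
have := le_of_forall_mul_lt1 a_le.
have -> : enorm u ^+ 2 / alpha = 2 * E by rewrite /E; field; rewrite gt_eqF.
by rewrite /a; lra.
Qed.

Lemma tangential_step_trial_le0 (sigma : R) : sigma <= 1 / 2 ->
  dotv g u + (sigma + 1 / 2) * enorm u ^+ 2 / alpha + r (y + u) - r y <= 0.
Proof.
move=> sigma_le; have := tangential_step_descent.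
have N_ge0 : 0 <= enorm u ^+ 2 / alpha by rewrite divr_ge0 ?sqr_ge0 // ltW.
rewrite -mulrA; move: N_ge0; set N := enorm u ^+ 2 / alpha; nra.
Qed.

End TangentialStep.

Lemma tau_update_gt0_le (R : realType) (eps tau D num : R) :
  0 < eps < 1 -> 0 < tau -> (0 < D -> 0 < num) -> 0 < tau_update eps tau D num <= tau.
Proof.
move=> /andP[eps_gt0 eps_lt1] tau_gt0 num_gt0; rewrite /tau_update.
have [_ | D_gt0] := lerP D 0; first by rewrite tau_gt0 lexx.
have [_ | _] := lerP tau (num / D); first by rewrite tau_gt0 lexx.
rewrite lt_min ge_min divr_gt0 ?num_gt0 // mulr_gt0 ?subr_gt0 //=.
by rewrite ger_pMl // gerBl ltW.
Qed.

(* Indexing: x k = x_k, alpha k = alpha_k, v k = v_k, u k = u_k (s_k = v k + u k),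
   and tau is shifted: tau 0 = tau_{-1}, tau k.+1 = tau_k. *)
Theorem lemma3p8 (R : realType) (n m : nat)
  (f : 'cV[R]_n -> R) (g : 'cV[R]_n -> 'cV[R]_n)
  (c : 'cV[R]_n -> 'cV[R]_m) (J : 'cV[R]_n -> 'M[R]_(m, n))
  (r : 'cV[R]_n -> R)
  (kappa_v sigma_c eps_tau xi eta sigma_u : R)
  (x : nat -> 'cV[R]_n) (alpha : nat -> R) (tau : nat -> R)
  (v u : nat -> 'cV[R]_n) :
  (* problem data *)
  (m <= n)%N ->
  (forall y, differentiable f y /\ forall h, 'd f y h = dotv (g y) h) ->
  continuous g ->
  (forall y, differentiable c y /\ forall h, 'd c y h = J y *m h) ->
  continuous J ->
  (forall y, 0 <= r y) -> convex_fun r ->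
  (* constants *)
  0 < kappa_v -> 0 < sigma_c < 1 -> 0 < eps_tau < 1 -> 0 < xi < 1 ->
  0 < eta < 1 -> 0 < sigma_u <= 1 / 2 ->
  0 < alpha 0 -> 0 < tau 0 ->
  (* standing assumption *)
  (exists X : set 'cV[R]_n,
     open X /\ convex_set X /\
     (forall k, X (x k)) /\ (forall k, X (x k + (v k + u k))) /\
         (exists B, forall y, X y -> B <= f y) /\
         (exists B, forall y, X y -> enorm (g y) <= B) /\
         (exists L, forall y z, X y -> X z ->
              enorm (g y - g z) <= L * enorm (y - z)) /\
         (exists B, forall y, X y -> enorm (c y) <= B) /\
         (exists B, forall y, X y -> fnorm (J y) <= B) /\
         (exists L, forall y z, X y -> X z ->
              fnorm (J y - J z) <= L * enorm (y - z)) /\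
         (exists B, forall y w, X y -> subgrad r y w -> enorm w <= B)) ->
  (* Step 1 *)
  (forall k, (J (x k))^T *m c (x k) != 0 ->
     [/\ exists w : 'cV[R]_m, v k = (J (x k))^T *m w,
         enorm (v k) <= kappa_v * alpha k * enorm ((J (x k))^T *m c (x k)) &
         exists beta : R,
           [/\ 0 <= beta <= kappa_v * alpha k,
               (forall beta', 0 <= beta' <= kappa_v * alpha k ->
                  enorm (c (x k) - beta *: (J (x k) *m (J (x k))^T *m c (x k))) ^+ 2 / 2
                  <= enorm (c (x k) - beta' *: (J (x k) *m (J (x k))^T *m c (x k))) ^+ 2 / 2) &
               enorm (c (x k) + J (x k) *m v k)
               <= enorm (c (x k) + J (x k) *m (- beta *: ((J (x k))^T *m c (x k))))]]) ->
  (forall k, (J (x k))^T *m c (x k) = 0 -> v k = 0) ->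
  (* Step 2 *)
  (forall k, J (x k) *m u k = 0 /\
     forall u', J (x k) *m u' = 0 ->
       dotv (g (x k)) (u k) + enorm (u k) ^+ 2 / (2 * alpha k) + r (x k + v k + u k)
       <= dotv (g (x k)) u' + enorm u' ^+ 2 / (2 * alpha k) + r (x k + v k + u')) ->
  (* Step 3 *)
  (forall k, tau k.+1 =
     tau_update eps_tau (tau k)
       (dotv (g (x k)) (v k + u k) + (sigma_u + 1 / 2) * enorm (v k + u k) ^+ 2 / alpha k
          + r (x k + (v k + u k)) - r (x k))
       ((1 - sigma_c) * (enorm (c (x k)) - enorm (c (x k) + J (x k) *m v k)))) ->
  (* Step 4 *)
  (forall k,
     let s := v k + u k in
     let Phi := fun y => tau k.+1 * (f y + r y) + enorm (c y) in
     let dq := - tau k.+1 * (dotv (g (x k)) s + enorm s ^+ 2 / (2 * alpha k)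
                             + r (x k + s) - r (x k))
               + enorm (c (x k)) - enorm (c (x k) + J (x k) *m s) in
     if Phi (x k + s) <= Phi (x k) - eta * dq
     then x k.+1 = x k + s /\ alpha k.+1 = alpha k
     else x k.+1 = x k /\ alpha k.+1 = xi * alpha k) ->
  (* the algorithm does not terminate finitely *)
  (forall k, (J (x k))^T *m c (x k) = 0 -> c (x k) = 0) ->
  (forall k, v k + u k != 0) ->
  forall k, (1 <= k)%N -> 0 < tau k.+1 <= tau k.
Proof.
move=> _ _ _ _ _ _ r_convex kappa_v_gt0 /andP[_ sigma_c_lt1] eps_tau01 /andP[xi_gt0 _] _
  /andP[_ sigma_u_le] alpha0_gt0 tau0_gt0 _ step1 step1_stationary step2 step3 step4 _ _.
have alpha_gt0 k : 0 < alpha k.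
  elim: k => // k IH; move: (step4 k) => /=.
  by case: ifP => _ [_ ->] //; rewrite mulr_gt0.
have tau_step k : 0 < tau k -> 0 < tau k.+1 <= tau k.
  move=> tau_gt0; rewrite step3; apply: tau_update_gt0_le => // D_gt0.
  rewrite mulr_gt0 ?subr_gt0 //.
  have [Jc_eq0 | Jc_neq0] := eqVneq ((J (x k))^T *m c (x k)) 0.
    have v_eq0 := step1_stationary k Jc_eq0; have [Ju_eq0 u_min] := step2 k.
    rewrite v_eq0 addr0 in u_min; rewrite v_eq0 !add0r in D_gt0.
    by have := tangential_step_trial_le0 (alpha_gt0 k) r_convex Ju_eq0 u_min sigma_u_le;
      rewrite leNgt D_gt0.
  have [_ _ beta_ok] := step1 k Jc_neq0.
  exact: normal_step_residual_lt (mulr_gt0 kappa_v_gt0 (alpha_gt0 k)) Jc_neq0 beta_ok.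
have tau_gt0 k : 0 < tau k by elim: k => // k IH; case/andP: (tau_step k IH).
by move=> k _; apply: tau_step.
Qed.
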